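(* Let $\gamma>0$ and let $\mathcal{W}_\gamma\subseteq(\mathbb{C}^M)^G$ be either the sum-power set $\{\mathbf{w}:\sum_{g\in\mathcal{G}}\|\mathbf{w}_g\|_2^2\le\gamma\}$ or the per-antenna-power set $\{\mathbf{w}:\sum_{g\in\mathcal{G}}|[\mathbf{w}_g]_m|^2\le\gamma,\ m=1,\dots,M\}$, where $[\mathbf{w}_g]_m$ is the $m$-th entry of $\mathbf{w}_g$. Consider $$V_{\mathrm{MMF}}=\sup_{\mathbf{w}\in\mathcal{W}_\gamma}\ \min_{g\in\mathcal{G},\,i\in\mathcal{N}_g}\ \inf_{\mathbf{e}_{ig}\in\mathcal{S}_{ig}}\mathrm{SINR}_{ig}(\mathbf{w},\mathbf{e}_{ig}),$$ $$V_{\mathrm{App}}=\sup\big\{t\ge 0:\ \exists\,\mathbf{w}\in\mathcal{W}_\gamma \text{ with } \zeta_{ig}(\mathbf{w},t)-|\mathbf{w}_g^H\hat{\mathbf{h}}_{ig}|\le 0\ \ \forall i\in\mathcal{N}_g,g\in\mathcal{G}\big\}.$$ Then: (a) if $t\ge0$ and $\mathbf{w}\in\mathcal{W}_\gamma$ satisfy $\zeta_{ig}(\mathbf{w},t)-|\mathbf{w}_g^H\hat{\mathbf{h}}_{ig}|\le 0$ for all $i\in\mathcal{N}_g,g\in\mathcal{G}$, then $\mathrm{SINR}_{ig}(\mathbf{w},\mathbf{e}_{ig})\ge t$ for all $i\in\mathcal{N}_g$, $g\in\mathcal{G}$, $\mathbf{e}_{ig}\in\mathcal{S}_{ig}$;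 (b) $V_{\mathrm{App}}\le V_{\mathrm{MMF}}$; (c) if $G=1$ and $\mathbf{C}_{i1}=\mu^{-2}\mathbf{I}_M$ for all $i\in\mathcal{N}_1$ with a constant $\mu>0$, then $V_{\mathrm{App}}=V_{\mathrm{MMF}}$.
   Context: Setting: $M\ge1$, $G\ge 1$, $\mathcal{G}=\{1,\dots,G\}$, finite nonempty index sets $\mathcal{N}_g$; for $i\in\mathcal{N}_g$, $g\in\mathcal{G}$: $\hat{\mathbf{h}}_{ig}\in\mathbb{C}^M$, $\sigma_{ig}>0$, $\mathbf{C}_{ig}$ Hermitian positive definite, $\varepsilon_{ig}=1/\sqrt{\lambda_{\min}(\mathbf{C}_{ig})}$, $\mathcal{S}_{ig}=\{\mathbf{e}\in\mathbb{C}^M:\mathbf{e}^H\mathbf{C}_{ig}\mathbf{e}\le 1\}$. For $\mathbf{w}=(\mathbf{w}_l)_{l\in\mathcal{G}}$, $\mathbf{w}_l\in\mathbb{C}^M$: $$\mathrm{SINR}_{ig}(\mathbf{w},\mathbf{e}_{ig})=\frac{|\mathbf{w}_g^H(\hat{\mathbf{h}}_{ig}+\mathbf{e}_{ig})|^2}{\sum_{l\in\mathcal{G},l\ne g}|\mathbf{w}_l^H(\hat{\mathbf{h}}_{ig}+\mathbf{e}_{ig})|^2+\sigma_{ig}^2},$$ and for $\tau\ge0$, $$\zeta_{ig}(\mathbf{w},\tau)=\varepsilon_{ig}\|\mathbf{w}_g\|_2+\sqrt{\tau}\,\sqrt{\sum_{l\in\mathcal{G},l\ne g}\big(|\mathbf{w}_l^H\hat{\mathbf{h}}_{ig}|+\varepsilon_{ig}\|\mathbf{w}_l\|_2\big)^2+\sigma_{ig}^2}.$$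 *)

From Stdlib Require Import Reals Lra ClassicalEpsilon.
Open Scope R_scope.

Record Cplx := mkC { cre : R ; cim : R }.
Definition C0 : Cplx := mkC 0 0.
Definition Cadd (a b : Cplx) : Cplx := mkC (cre a + cre b) (cim a + cim b).
Definition Cmul (a b : Cplx) : Cplx :=
  mkC (cre a * cre b - cim a * cim b) (cre a * cim b + cim a * cre b).
Definition Cconj (a : Cplx) : Cplx := mkC (cre a) (- cim a).
Definition Cnorm2 (a : Cplx) : R := cre a * cre a + cim a * cim a.
Definition Cabs (a : Cplx) : R := sqrt (Cnorm2 a).
Definition RtoC (r : R) : Cplx := mkC r 0.

Fixpoint rsum (n : nat) (f : nat -> R) : R :=
  match n with O => 0 | S k => rsum k f + f k end.
Fixpoint csum (n : nat) (f : nat -> Cplx) : Cplx :=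
  match n with O => C0 | S k => Cadd (csum k f) (f k) end.

(* minimum of f 0, ..., f (n-1)  (meaningful for n >= 1) *)
Fixpoint fmin (n : nat) (f : nat -> R) : R :=
  match n with
  | O => 0
  | S k => match k with O => f O | _ => Rmin (fmin k f) (f k) end
  end.

(* ---------- vectors in C^M and M x M matrices (entries at indices < M) ---------- *)
Definition cvec := nat -> Cplx.
Definition cmat := nat -> nat -> Cplx.
Definition vadd (u v : cvec) : cvec := fun k => Cadd (u k) (v k).
Definition vdot (M : nat) (u v : cvec) : Cplx :=
  csum M (fun k => Cmul (Cconj (u k)) (v k)).
Definition vnorm (M : nat) (u : cvec) : R := sqrt (rsum M (fun k => Cnorm2 (u k))).
Definition matvec (M : nat) (A : cmat) (v : cvec) : cvec :=
  fun k => csum M (fun l => Cmul (A k l) (v l)).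

Definition Hermitian (M : nat) (A : cmat) : Prop :=
  forall k l, (k < M)%nat -> (l < M)%nat -> A k l = Cconj (A l k).
Definition nonzero_vec (M : nat) (v : cvec) : Prop := exists k, (k < M)%nat /\ v k <> C0.
Definition HermitianPD (M : nat) (A : cmat) : Prop :=
  Hermitian M A /\
  forall v, nonzero_vec M v -> 0 < cre (vdot M v (matvec M A v)).

(* (real) eigenvalue; eigenvalues of a Hermitian matrix are all real *)
Definition is_eigenvalue (M : nat) (A : cmat) (lam : R) : Prop :=
  exists v, nonzero_vec M v /\
    forall k, (k < M)%nat -> matvec M A v k = Cmul (RtoC lam) (v k).

(* Sup P is the least upper bound of P whenever it exists (chosen by epsilon). *)
Definition Sup (P : R -> Prop) : R := epsilon (inhabits 0) (fun x => is_lub P x).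
Definition Inf (P : R -> Prop) : R := - Sup (fun x => P (- x)).

Definition lambda_min (M : nat) (A : cmat) : R := Inf (is_eigenvalue M A).

(* groups g in {0..G-1}; users i of group g in {0..N g - 1};
   hhat i g, sigma i g, Cm i g are the data; beamformer w : nat -> cvec (w g). *)

Definition epsig (M : nat) (Cm : nat -> nat -> cmat) (i g : nat) : R :=
  1 / sqrt (lambda_min M (Cm i g)).

Definition in_S (M : nat) (Cm : nat -> nat -> cmat) (i g : nat) (e : cvec) : Prop :=
  cre (vdot M e (matvec M (Cm i g) e)) <= 1.

Definition SINR (M G : nat) (hhat : nat -> nat -> cvec) (sigma : nat -> nat -> R)
  (w : nat -> cvec) (i g : nat) (e : cvec) : R :=
  let h := vadd (hhat i g) e in
  Cnorm2 (vdot M (w g) h) /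
  (rsum G (fun l => if Nat.eq_dec l g then 0 else Cnorm2 (vdot M (w l) h))
   + sigma i g ^ 2).

Definition zeta (M G : nat) (hhat : nat -> nat -> cvec) (sigma : nat -> nat -> R)
  (Cm : nat -> nat -> cmat) (w : nat -> cvec) (t : R) (i g : nat) : R :=
  epsig M Cm i g * vnorm M (w g) +
  sqrt t * sqrt (rsum G (fun l => if Nat.eq_dec l g then 0 else
                          (Cabs (vdot M (w l) (hhat i g)) + epsig M Cm i g * vnorm M (w l)) ^ 2)
                 + sigma i g ^ 2).

Inductive PowerConstraint := SumPower | PerAntennaPower.

Definition in_W (M G : nat) (pc : PowerConstraint) (gamma : R) (w : nat -> cvec) : Prop :=
  match pc with
  | SumPower => rsum G (fun g => vnorm M (w g) ^ 2) <= gamma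
  | PerAntennaPower => forall m, (m < M)%nat -> rsum G (fun g => Cnorm2 (w g m)) <= gamma
  end.

Definition worst_SINR (M G : nat) (N : nat -> nat) (hhat : nat -> nat -> cvec)
  (sigma : nat -> nat -> R) (Cm : nat -> nat -> cmat) (w : nat -> cvec) : R :=
  fmin G (fun g => fmin (N g) (fun i =>
    Inf (fun s => exists e, in_S M Cm i g e /\ s = SINR M G hhat sigma w i g e))).

Definition V_MMF (M G : nat) (N : nat -> nat) (hhat : nat -> nat -> cvec)
  (sigma : nat -> nat -> R) (Cm : nat -> nat -> cmat) (pc : PowerConstraint) (gamma : R) : R :=
  Sup (fun r => exists w, in_W M G pc gamma w /\ r = worst_SINR M G N hhat sigma Cm w).

Definition app_feasible (M G : nat) (N : nat -> nat) (hhat : nat -> nat -> cvec)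
  (sigma : nat -> nat -> R) (Cm : nat -> nat -> cmat) (w : nat -> cvec) (t : R) : Prop :=
  forall g i, (g < G)%nat -> (i < N g)%nat ->
    zeta M G hhat sigma Cm w t i g - Cabs (vdot M (w g) (hhat i g)) <= 0.

Definition V_App (M G : nat) (N : nat -> nat) (hhat : nat -> nat -> cvec)
  (sigma : nat -> nat -> R) (Cm : nat -> nat -> cmat) (pc : PowerConstraint) (gamma : R) : R :=
  Sup (fun t => 0 <= t /\ exists w, in_W M G pc gamma w /\ app_feasible M G N hhat sigma Cm w t).

From Pilot Require Import Defs.
From Stdlib Require Import Reals Lra Lia ClassicalEpsilon.
From mathcomp Require all_boot all_order all_algebra complex spectral sesquilinear Rstruct.
Open Scope R_scope.

(** Everything rests on one geometric fact: an error vector e of the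
    ellipsoid S_ig = {e | e^H C_ig e <= 1} has Euclidean norm at most
    eps_ig = 1/sqrt(lambda_min C_ig), by the Rayleigh bound
    lambda_min ||e||^2 <= e^H C e (obtained from MathComp's spectral theorem).
    With Cauchy-Schwarz and the triangle inequality this bounds every received
    amplitude |w_l^H (h + e)| between |w_l^H h| -/+ eps ||w_l||, which gives
    (a): feasibility for the approximation at level t forces SINR >= t for all
    admissible errors.  Part (b) follows by comparing suprema, once both value
    sets are known to be non-empty (w = 0) and bounded (the SINR is bounded on
    the power set).  For (c), with one group and C = mu^-2 I, the error
    e = -k (w^H h) w aligned with the beamformer attains the lower bound of (a),
    so the worst-case SINR of w is max(0, |w^H h| - mu ||w||)^2 / sigma^2 and
    w itself is feasible for the approximation at its worst-case SINR. *)

Module Spectral.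
Import all_boot all_order all_algebra complex spectral sesquilinear Rstruct.
Import Order.TTheory GRing.Theory Num.Theory.
Local Open Scope ring_scope.
Local Open Scope complex_scope.
Local Open Scope sesquilinear_scope.
Notation RC := (Rdefinitions.R[i]).

Lemma hermitian_min_eigenpair n (A : 'M[RC]_n.+1) : A \is hermsymmx ->
  exists d0 : Rdefinitions.R, exists2 v : 'cV[RC]_n.+1, v != 0 &
    (A *m v = d0%:C *: v /\
     forall x : 'cV[RC]_n.+1, d0%:C * (x^t* *m x) 0 0 <= (x^t* *m A *m x) 0 0).
Proof.
move=> HA.
have EA : A = invmx (spectralmx A) *m diag_mx (spectral_diag A) *m spectralmx A.
  exact/orthomx_spectralP/hermitian_normalmx.
set P := spectralmx A in EA *; set d := spectral_diag A in EA *.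
have PU : P \is unitarymx by exact: spectral_unitarymx.
have PQ : P *m P^t* = 1%:M by exact/unitarymxP.
have QP : P^t* *m P = 1%:M by rewrite -invmx_unitary // mulVmx // unitarymx_unit.
rewrite invmx_unitary // in EA.
have dRe : forall j, d 0 j = (complex.Re (d 0 j))%:C.
  move=> j; have := mxOverP (hermitian_spectral_diag_real HA) 0 j.
  by case: (d 0 j) => a b; rewrite complex_real => /eqP -> /=.
have [jm _ Hjm] := @arg_minP _ _ 'I_n.+1 ord0 predT (fun j => complex.Re (d 0 j)) isT.
exists (complex.Re (d 0 jm)); exists (col jm (P^t* )); [|split].
- apply/eqP => h0.
  have H : delta_mx jm 0 = (0 : 'cV[RC]_n.+1).
    by rewrite -(mulmx0 _ P) -h0 colE mulmxA PQ mul1mx.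
  have := congr1 (fun M : 'cV[RC]_n.+1 => M jm 0) H.
  by rewrite /= !mxE !eqxx /= => /eqP; rewrite oner_eq0.
- have -> : A *m col jm (P^t* ) = col jm (P^t* *m diag_mx d).
    by rewrite !colE EA -!mulmxA (mulmxA P) PQ mul1mx.
  by apply/matrixP => i j; rewrite [LHS]mxE mul_mx_diag !mxE -dRe mulrC.
- move=> x; rewrite EA; set y := P *m x.
  have Ex : x^t* *m P^t* = y^t* by rewrite /y trmx_mul map_mxM.
  have -> : x^t* *m (P^t* *m diag_mx d *m P) *m x = y^t* *m diag_mx d *m y.
    by rewrite /y !mulmxA Ex.
  have -> : x^t* *m x = y^t* *m y by rewrite -Ex /y -mulmxA (mulmxA _ P) QP mul1mx.
  rewrite !mxE mulr_sumr; apply: ler_sum => j _.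
  rewrite mul_mx_diag [(\matrix_(_, _) _) 0 j]mxE [_ * d 0 j]mulrC -mulrA.
  apply: ler_wpM2r; first by rewrite !mxE mulrC; exact: mul_conjC_ge0.
  by rewrite [X in _ <= X]dRe lecR; exact: Hjm.
Qed.

Definition toC (z : Cplx) : RC := (cre z) +i* (cim z).
Definition ofC (z : RC) : Cplx := mkC (complex.Re z) (complex.Im z).

Lemma toC_ofC z : toC (ofC z) = z. Proof. by case: z. Qed.
Lemma toC_inj a b : toC a = toC b -> a = b.
Proof. by case: a => ? ?; case: b => ? ? [-> ->]. Qed.
Lemma toC_mul a b : toC (Cmul a b) = toC a * toC b. Proof. by []. Qed.
Lemma toC_conj a : toC (Cconj a) = Num.conj (toC a). Proof. by []. Qed.
Lemma toC_csum n f : toC (csum n f) = \sum_(k < n) toC (f k).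
Proof. by elim: n => [|n IH]; rewrite ?big_ord0 // big_ord_recr /= -IH. Qed.

Lemma rayleigh_min_eigenvalue n (C : cmat) : Defs.Hermitian n.+1 C ->
  exists d0 : Rdefinitions.R, is_eigenvalue n.+1 C d0 /\
    forall e : cvec, Rle (Rmult d0 (cre (vdot n.+1 e e)))
                         (cre (vdot n.+1 e (matvec n.+1 C e))).
Proof.
move=> HC; pose A : 'M[RC]_n.+1 := \matrix_(k, l) toC (C k l).
have HA : A \is hermsymmx.
  apply/is_hermitianmxP; rewrite expr0 scale1r; apply/matrixP => k l.
  by rewrite !mxE (HC k l) //; apply/ssrnat.ltP.
have [d0 [v vnz [Av Hq]]] := @hermitian_min_eigenpair n A HA.
exists d0; split.
- exists (fun k => if (k < n.+1)%N then ofC (v (inord k) 0) else C0); split.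
  + case: (pickP (fun j => v j 0 != 0)) => [j Hj|H0].
      exists j; split; first exact/ssrnat.ltP.
      rewrite ltn_ord inord_val => E; move/negP: Hj; apply.
      by rewrite -[v j 0]toC_ofC E.
    exfalso; move/negP: vnz; apply; apply/eqP/matrixP => i j; rewrite ord1 mxE.
    by move/negbFE/eqP: (H0 i).
  + move=> k /ssrnat.ltP Hk; apply: toC_inj; rewrite toC_csum toC_mul Hk toC_ofC.
    have -> : toC (RtoC d0) = d0%:C by [].
    have -> : d0%:C * v (inord k) 0 = (A *m v) (inord k) 0 by rewrite Av !mxE.
    rewrite !mxE; apply: eq_bigr => l _; rewrite toC_mul ltn_ord inord_val.
    by rewrite toC_ofC mxE inordK.
- move=> e; pose x : 'cV[RC]_n.+1 := \col_k toC (e k).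
  have E1 : toC (vdot n.+1 e e) = (x^t* *m x) 0 0.
    rewrite /vdot toC_csum !mxE; apply: eq_bigr => k _.
    by rewrite toC_mul toC_conj !mxE.
  have E2 : toC (vdot n.+1 e (matvec n.+1 C e)) = (x^t* *m A *m x) 0 0.
    rewrite -mulmxA /vdot toC_csum !mxE; apply: eq_bigr => k _.
    rewrite toC_mul toC_conj !mxE toC_csum; congr (_ * _).
    by apply: eq_bigr => l _; rewrite toC_mul !mxE.
  have := Hq x; rewrite -E1 -E2 lecE => /andP [_ H].
  apply/RleP; move: H; rewrite /toC /=.
  by case: (vdot n.+1 e e) => a b /=; rewrite mul0r subr0.
Qed.
End Spectral.

Lemma rsum_ext n f g : (forall k, (k < n)%nat -> f k = g k) -> rsum n f = rsum n g.
Proof.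
  induction n as [|n IH]; intros H; simpl; [reflexivity|].
  rewrite IH by (intros; apply H; lia). rewrite (H n) by lia. reflexivity.
Qed.

Lemma rsum_le n f g : (forall k, (k < n)%nat -> f k <= g k) -> rsum n f <= rsum n g.
Proof.
  induction n as [|n IH]; intros H; simpl; [lra|].
  assert (rsum n f <= rsum n g) by (apply IH; intros; apply H; lia).
  assert (f n <= g n) by (apply H; lia). lra.
Qed.

Lemma rsum_const n c : rsum n (fun _ => c) = INR n * c.
Proof. induction n as [|n IH]; simpl rsum; [simpl; ring|]. rewrite IH, S_INR. ring. Qed.

Lemma rsum_nonneg n f : (forall k, (k < n)%nat -> 0 <= f k) -> 0 <= rsum n f.
Proof.
  intros H. rewrite <- (Rmult_0_r (INR n)), <- rsum_const. apply rsum_le. exact H.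
Qed.

Lemma rsum_add n f g : rsum n (fun k => f k + g k) = rsum n f + rsum n g.
Proof. induction n; simpl; [lra|]. rewrite IHn. lra. Qed.

Lemma rsum_scal n c f : rsum n (fun k => c * f k) = c * rsum n f.
Proof. induction n; simpl; [lra|]. rewrite IHn. lra. Qed.

Lemma rsum_term n f k : (forall j, (j < n)%nat -> 0 <= f j) -> (k < n)%nat -> f k <= rsum n f.
Proof.
  induction n as [|n IH]; intros H Hk; [lia|]. simpl.
  assert (0 <= f n) by (apply H; lia).
  destruct (Nat.eq_dec k n) as [->|Hne].
  - assert (0 <= rsum n f) by (apply rsum_nonneg; intros; apply H; lia). lra.
  - assert (f k <= rsum n f) by (apply IH; [intros; apply H; lia|lia]). lra.
Qed.

Lemma rsum_delta n k f : (k < n)%nat ->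
  rsum n (fun l => if Nat.eq_dec k l then f l else 0) = f k.
Proof.
  induction n as [|n IH]; intros Hk; [lia|]. simpl.
  destruct (Nat.eq_dec k n) as [->|Hne].
  - rewrite (rsum_ext _ _ (fun _ => 0)), rsum_const; [ring|].
    intros j Hj. destruct (Nat.eq_dec n j); [lia|reflexivity].
  - rewrite IH by lia. ring.
Qed.

Lemma csum_re n f : cre (csum n f) = rsum n (fun k => cre (f k)).
Proof. induction n; simpl; [reflexivity|]. rewrite IHn. reflexivity. Qed.

Lemma csum_im n f : cim (csum n f) = rsum n (fun k => cim (f k)).
Proof. induction n; simpl; [reflexivity|]. rewrite IHn. reflexivity. Qed.

Lemma Cext a b : cre a = cre b -> cim a = cim b -> a = b.
Proof. destruct a, b; simpl; intros; subst; reflexivity. Qed.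

Lemma Cnorm2_nonneg z : 0 <= Cnorm2 z.
Proof. unfold Cnorm2. nra. Qed.

Lemma Cnorm2_pos z : z <> C0 -> 0 < Cnorm2 z.
Proof.
  intros H. destruct (Rlt_dec 0 (Cnorm2 z)) as [|Hn]; [assumption|].
  exfalso. apply H. pose proof (Cnorm2_nonneg z). unfold Cnorm2 in *.
  apply Cext; simpl; nra.
Qed.

Lemma Cnorm2_real_scal s z : Cnorm2 (Cmul (RtoC s) z) = s ^ 2 * Cnorm2 z.
Proof. unfold Cnorm2. simpl. ring. Qed.

Lemma Cabs_sq z : Cabs z ^ 2 = Cnorm2 z.
Proof. unfold Cabs. rewrite pow2_sqrt; [reflexivity|apply Cnorm2_nonneg]. Qed.

Lemma Cabs_nonneg z : 0 <= Cabs z.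
Proof. apply sqrt_pos. Qed.

Lemma le_of_sq_le x y : 0 <= y -> x ^ 2 <= y ^ 2 -> x <= y.
Proof. intros. nra. Qed.

Lemma Cabs_triangle z w :
  Cabs (Cadd z w) <= Cabs z + Cabs w /\ Cabs z - Cabs w <= Cabs (Cadd z w).
Proof.
  pose proof (Cabs_sq z) as Hz. pose proof (Cabs_sq w) as Hw.
  pose proof (Cabs_sq (Cadd z w)) as Hs.
  pose proof (Cabs_nonneg z). pose proof (Cabs_nonneg w). pose proof (Cabs_nonneg (Cadd z w)).
  set (X := cre z * cre w + cim z * cim w).
  assert (HX : X ^ 2 <= (Cabs z * Cabs w) ^ 2).
  { rewrite Rpow_mult_distr, Hz, Hw. unfold X, Cnorm2.
    pose proof (pow2_ge_0 (cre z * cim w - cim z * cre w)). nra. }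
  assert (Hp : 0 <= Cabs z * Cabs w) by (apply Rmult_le_pos; assumption).
  assert (E : Cabs (Cadd z w) ^ 2 = Cabs z ^ 2 + Cabs w ^ 2 + 2 * X).
  { rewrite Hs, Hz, Hw. unfold X, Cnorm2. simpl. ring. }
  split; apply le_of_sq_le; nra.
Qed.

Definition vn2 n (e : cvec) : R := rsum n (fun k => Cnorm2 (e k)).

Definition vscale (c : Cplx) (v : cvec) : cvec := fun k => Cmul c (v k).

Definition zero_vec : cvec := fun _ => C0.

Lemma vdot_re n a b : cre (vdot n a b) =
  rsum n (fun k => cre (a k) * cre (b k) + cim (a k) * cim (b k)).
Proof. unfold vdot. rewrite csum_re. apply rsum_ext. intros; simpl; ring. Qed.

Lemma vdot_im n a b : cim (vdot n a b) =
  rsum n (fun k => cre (a k) * cim (b k) - cim (a k) * cre (b k)).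
Proof. unfold vdot. rewrite csum_im. apply rsum_ext. intros; simpl; ring. Qed.

Lemma vn2_nonneg n e : 0 <= vn2 n e.
Proof. apply rsum_nonneg. intros; apply Cnorm2_nonneg. Qed.

Lemma vnorm_sq n e : vnorm n e ^ 2 = vn2 n e.
Proof. unfold vnorm. rewrite pow2_sqrt; [reflexivity|apply vn2_nonneg]. Qed.

Lemma vnorm_nonneg n e : 0 <= vnorm n e.
Proof. apply sqrt_pos. Qed.

Lemma vdot_self n u : vdot n u u = RtoC (vn2 n u).
Proof.
  apply Cext; simpl; [rewrite vdot_re|rewrite vdot_im].
  - apply rsum_ext. intros; unfold Cnorm2; ring.
  - rewrite (rsum_ext _ _ (fun _ => 0)), rsum_const; [ring|]. intros; ring.
Qed.

Lemma vdot_self_re n u : cre (vdot n u u) = vn2 n u.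
Proof. rewrite vdot_self. reflexivity. Qed.

Lemma vdot_vadd n a b c : vdot n a (vadd b c) = Cadd (vdot n a b) (vdot n a c).
Proof.
  apply Cext; simpl; rewrite ?vdot_re, ?vdot_im; rewrite <- rsum_add; apply rsum_ext;
    intros; unfold vadd; simpl; ring.
Qed.

Lemma vdot_vscale n u c v : vdot n u (vscale c v) = Cmul c (vdot n u v).
Proof.
  unfold vdot, vscale. induction n as [|n IH]; simpl; [|rewrite IH];
    apply Cext; simpl; ring.
Qed.

Lemma vn2_vscale n c v : vn2 n (vscale c v) = Cnorm2 c * vn2 n v.
Proof.
  unfold vn2. rewrite <- rsum_scal. apply rsum_ext. intros; unfold vscale, Cnorm2; simpl; ring.
Qed.

Lemma vn2_zero n : vn2 n zero_vec = 0.
Proof. unfold vn2. rewrite (rsum_ext _ _ (fun _ => 0)), rsum_const; [ring|]. intros; unfold zero_vec, Cnorm2; simpl; ring. Qed.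

Lemma vnorm_zero n : vnorm n zero_vec = 0.
Proof. unfold vnorm. fold (vn2 n zero_vec). rewrite vn2_zero. apply sqrt_0. Qed.

(* One step of the induction for Cauchy-Schwarz: if |z|^2 <= A B and
   |z'|^2 = a b then |z + z'|^2 <= (A + a)(B + b). *)
Lemma cauchy_schwarz_step R0 I0 r i A B al be : 0 <= A -> 0 <= B -> 0 <= al -> 0 <= be ->
  R0 ^ 2 + I0 ^ 2 <= A * B -> r ^ 2 + i ^ 2 = al * be ->
  (R0 + r) ^ 2 + (I0 + i) ^ 2 <= (A + al) * (B + be).
Proof.
  intros HA HB Hal Hbe H1 H2.
  set (X := R0 * r + I0 * i).
  assert (HX : X ^ 2 <= (A * be) * (B * al)).
  { assert ((R0 ^ 2 + I0 ^ 2) * (r ^ 2 + i ^ 2) - X ^ 2 = (R0 * i - I0 * r) ^ 2)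
      by (unfold X; ring).
    pose proof (pow2_ge_0 (R0 * i - I0 * r)).
    assert ((R0 ^ 2 + I0 ^ 2) * (r ^ 2 + i ^ 2) <= (A * B) * (al * be)).
    { rewrite H2. apply Rmult_le_compat_r; [nra|exact H1]. }
    nra. }
  (* AM-GM: 2 X <= A be + B al *)
  assert (H2X : 2 * X <= A * be + B * al).
  { apply le_of_sq_le; [nra|].
    pose proof (pow2_ge_0 (A * be - B * al)). nra. }
  assert ((R0 + r) ^ 2 + (I0 + i) ^ 2 = (R0 ^ 2 + I0 ^ 2) + 2 * X + (r ^ 2 + i ^ 2))
    by (unfold X; ring).
  nra.
Qed.

Lemma cauchy_schwarz n a b : Cnorm2 (vdot n a b) <= vn2 n a * vn2 n b.
Proof.
  unfold Cnorm2. rewrite vdot_re, vdot_im. unfold vn2.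
  induction n as [|n IH]; simpl; [lra|].
  pose proof (cauchy_schwarz_step
     (rsum n (fun k => cre (a k) * cre (b k) + cim (a k) * cim (b k)))
     (rsum n (fun k => cre (a k) * cim (b k) - cim (a k) * cre (b k)))
     (cre (a n) * cre (b n) + cim (a n) * cim (b n))
     (cre (a n) * cim (b n) - cim (a n) * cre (b n))
     (rsum n (fun k => Cnorm2 (a k))) (rsum n (fun k => Cnorm2 (b k)))
     (Cnorm2 (a n)) (Cnorm2 (b n))) as H.
  pose proof (vn2_nonneg n a). pose proof (vn2_nonneg n b). unfold vn2 in *.
  specialize (H ltac:(assumption) ltac:(assumption) (Cnorm2_nonneg _) (Cnorm2_nonneg _)).
  unfold Cnorm2 in *. nra.
Qed.

Lemma cauchy_schwarz_abs n a b : Cabs (vdot n a b) <= vnorm n a * vnorm n b.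
Proof.
  apply le_of_sq_le.
  - apply Rmult_le_pos; apply vnorm_nonneg.
  - rewrite Cabs_sq, Rpow_mult_distr, !vnorm_sq. apply cauchy_schwarz.
Qed.

Lemma perturbed_amplitude n w h e r : vnorm n e <= r ->
  Cabs (vdot n w h) - r * vnorm n w <= Cabs (vdot n w (vadd h e)) <=
  Cabs (vdot n w h) + r * vnorm n w.
Proof.
  intros He. rewrite vdot_vadd.
  destruct (Cabs_triangle (vdot n w h) (vdot n w e)) as [T1 T2].
  pose proof (cauchy_schwarz_abs n w e). pose proof (vnorm_nonneg n w).
  assert (vnorm n w * vnorm n e <= r * vnorm n w) by nra. lra.
Qed.

(* The worst perturbation in the ball of radius r: the error aligned with w
   and opposite to w^H h cancels r ||w|| of the amplitude (or all of it). *)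
Lemma worst_perturbation n w h r : 0 < r ->
  exists e, vn2 n e <= r ^ 2 /\
    Cnorm2 (vdot n w (vadd h e)) = Rmax 0 (Cabs (vdot n w h) - r * vnorm n w) ^ 2.
Proof.
  intros Hr. set (z := vdot n w h). set (a := Cabs z). set (nw := vnorm n w).
  assert (Ha2 : a ^ 2 = Cnorm2 z) by apply Cabs_sq.
  assert (Hn2 : nw ^ 2 = vn2 n w) by apply vnorm_sq.
  assert (Ha0 : 0 <= a) by apply Cabs_nonneg.
  assert (Hn0 : 0 <= nw) by apply vnorm_nonneg.
  assert (Hcand : forall k, let e := vscale (Cmul (RtoC (- k)) z) w in
    vn2 n e = k ^ 2 * a ^ 2 * nw ^ 2 /\
    Cnorm2 (vdot n w (vadd h e)) = (1 - k * nw ^ 2) ^ 2 * a ^ 2).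
  { intros k e. unfold e. rewrite vn2_vscale, Cnorm2_real_scal, vdot_vadd, vdot_vscale,
      vdot_self, Ha2, Hn2. fold z. split; [ring|].
    unfold Cnorm2; simpl; ring. }
  destruct (Rle_lt_dec (r * nw) a) as [Hle|Hlt].
  - rewrite Rmax_right by lra.
    destruct (Req_dec nw 0) as [Hn|Hn].
    + (* w = 0: every amplitude vanishes and e = 0 will do *)
      assert (a = 0).
      { pose proof (cauchy_schwarz n w h) as CS. fold z in CS.
        rewrite <- Hn2, Hn, <- Ha2 in CS. pose proof (vn2_nonneg n h). nra. }
      destruct (Hcand 0) as [E1 E2].
      eexists; split; [rewrite E1; nra|rewrite E2, Hn; subst a; ring].
    + assert (Hap : 0 < a) by nra.
      destruct (Hcand (r / (a * nw))) as [E1 E2].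
      eexists; split; [rewrite E1; right; field; lra|rewrite E2; field; lra].
  - rewrite Rmax_left by lra.
    assert (Hnp : 0 < nw) by nra.
    destruct (Hcand (/ nw ^ 2)) as [E1 E2].
    eexists; split.
    + rewrite E1. replace (( / nw ^ 2) ^ 2 * a ^ 2 * nw ^ 2) with ((a / nw) ^ 2) by (field; lra).
      assert (Hq : a / nw <= r).
      { apply Rmult_le_reg_r with nw; [lra|]. unfold Rdiv. rewrite Rmult_assoc, Rinv_l; lra. }
      apply pow_incr. split; [|exact Hq].
      unfold Rdiv. apply Rmult_le_pos; [lra|left; apply Rinv_0_lt_compat; lra].
    + rewrite E2. replace (1 - / nw ^ 2 * nw ^ 2) with 0 by (field; lra). ring.
Qed.

Lemma Sup_lub (P : R -> Prop) : (exists x, P x) -> (exists B, forall x, P x -> x <= B) ->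
  is_lub P (Sup P).
Proof.
  intros [x Hx] [B HB]. unfold Sup. apply epsilon_spec.
  destruct (completeness P) as [m Hm].
  - exists B. intros y Hy. apply HB; exact Hy.
  - exists x; exact Hx.
  - exists m; exact Hm.
Qed.

Lemma Inf_glb (P : R -> Prop) L : (exists x, P x) -> (forall x, P x -> L <= x) ->
  (forall x, P x -> Inf P <= x) /\ (forall L', (forall x, P x -> L' <= x) -> L' <= Inf P).
Proof.
  intros [x0 Hx0] Hlb.
  assert (Hl : is_lub (fun x => P (- x)) (Sup (fun x => P (- x)))).
  { apply Sup_lub.
    - exists (- x0). rewrite Ropp_involutive. exact Hx0.
    - exists (- L). intros y Hy. specialize (Hlb _ Hy). lra. }
  destruct Hl as [Hub Hleast]. unfold Inf. split.
  - intros x Hx. assert (- x <= Sup (fun x => P (- x))).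
    { apply Hub. rewrite Ropp_involutive. exact Hx. }
    lra.
  - intros L' HL'. assert (Sup (fun x => P (- x)) <= - L').
    { apply Hleast. intros y Hy. specialize (HL' _ Hy). lra. }
    lra.
Qed.

Lemma Inf_min (P : R -> Prop) x0 : P x0 -> (forall x, P x -> x0 <= x) -> Inf P = x0.
Proof.
  intros Hx0 Hlb. destruct (Inf_glb P x0) as [H1 H2]; [exists x0; exact Hx0|exact Hlb|].
  apply Rle_antisym; [apply H1; exact Hx0|apply H2; exact Hlb].
Qed.

Lemma fmin_le n f k : (k < n)%nat -> fmin n f <= f k.
Proof.
  induction n as [|n IH]; intros Hk; [lia|].
  destruct n as [|n].
  - simpl. replace k with 0%nat by lia. lra.
  - change (fmin (S (S n)) f) with (Rmin (fmin (S n) f) (f (S n))).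
    destruct (Nat.eq_dec k (S n)) as [->|Hne]; [apply Rmin_r|].
    eapply Rle_trans; [apply Rmin_l|]. apply IH. lia.
Qed.

Lemma fmin_ge n f c : (1 <= n)%nat -> (forall k, (k < n)%nat -> c <= f k) -> c <= fmin n f.
Proof.
  induction n as [|n IH]; intros Hn H; [lia|].
  destruct n as [|n].
  - simpl. apply H. lia.
  - change (fmin (S (S n)) f) with (Rmin (fmin (S n) f) (f (S n))).
    apply Rmin_glb; [apply IH; [lia|intros k Hk; apply H; lia]|apply H; lia].
Qed.

Lemma quad_form_eigenvector n C v c :
  (forall k, (k < n)%nat -> matvec n C v k = Cmul (RtoC c) (v k)) ->
  cre (vdot n v (matvec n C v)) = c * vn2 n v.
Proof.
  intros H. rewrite vdot_re. unfold vn2. rewrite <- rsum_scal. apply rsum_ext.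
  intros k Hk. rewrite (H k Hk). unfold Cnorm2. simpl. ring.
Qed.

Lemma nonzero_vn2 n v : nonzero_vec n v -> 0 < vn2 n v.
Proof.
  intros [k [Hk Hv]]. apply Rlt_le_trans with (Cnorm2 (v k)).
  - apply Cnorm2_pos; exact Hv.
  - apply (rsum_term n (fun k => Cnorm2 (v k))); [intros; apply Cnorm2_nonneg|exact Hk].
Qed.

Lemma lambda_min_rayleigh M C : (1 <= M)%nat -> HermitianPD M C ->
  0 < lambda_min M C /\
  forall e, lambda_min M C * vn2 M e <= cre (vdot M e (matvec M C e)).
Proof.
  intros HM [HH HPD]. destruct M as [|n]; [lia|].
  destruct (Spectral.rayleigh_min_eigenvalue n C HH) as [d0 [Hd0 Hq]].
  assert (Hlow : forall lam, is_eigenvalue (S n) C lam -> d0 <= lam /\ 0 < lam).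
  { intros lam [v [Hnz Hv]].
    pose proof (quad_form_eigenvector _ _ _ _ Hv) as E.
    pose proof (nonzero_vn2 _ _ Hnz) as Hpos.
    pose proof (HPD v Hnz) as Hp. pose proof (Hq v) as Hb.
    rewrite vdot_self_re in Hb. rewrite E in Hp, Hb. split.
    - apply (Rmult_le_reg_r (vn2 (S n) v)); assumption.
    - nra. }
  assert (Hl : lambda_min (S n) C = d0).
  { apply Inf_min; [exact Hd0|]. intros x Hx. apply Hlow; exact Hx. }
  rewrite Hl. split; [apply Hlow; exact Hd0|].
  intros e. pose proof (Hq e) as He. rewrite vdot_self_re in He. exact He.
Qed.

Lemma error_norm_bound M Cm i g e : (1 <= M)%nat -> HermitianPD M (Cm i g) ->
  in_S M Cm i g e -> vnorm M e <= epsig M Cm i g.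
Proof.
  intros HM HC HS. destruct (lambda_min_rayleigh M (Cm i g) HM HC) as [Hpos Hq].
  pose proof (Hq e) as He. unfold in_S in HS. unfold epsig.
  set (L := lambda_min M (Cm i g)) in *.
  assert (Hs : 0 < sqrt L) by (apply sqrt_lt_R0; exact Hpos).
  assert (Hs2 : sqrt L ^ 2 = L) by (apply pow2_sqrt; lra).
  pose proof (vnorm_sq M e). pose proof (vnorm_nonneg M e).
  assert (Hx : vnorm M e * sqrt L <= 1).
  { apply le_of_sq_le; [lra|]. rewrite Rpow_mult_distr, H, Hs2. lra. }
  apply (Rmult_le_reg_r (sqrt L)); [exact Hs|].
  unfold Rdiv. rewrite Rmult_1_l, Rinv_l by lra. exact Hx.
Qed.

Definition is_scalar_mat M (C : cmat) (c : R) : Prop :=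
  forall k l, (k < M)%nat -> (l < M)%nat -> C k l = if Nat.eq_dec k l then RtoC c else C0.

Lemma scalar_matvec M C c v : is_scalar_mat M C c ->
  forall k, (k < M)%nat -> matvec M C v k = Cmul (RtoC c) (v k).
Proof.
  intros H k Hk. apply Cext; unfold matvec; [rewrite csum_re|rewrite csum_im];
    [rewrite (rsum_ext M _ (fun l => if Nat.eq_dec k l then c * cre (v l) else 0))
    |rewrite (rsum_ext M _ (fun l => if Nat.eq_dec k l then c * cim (v l) else 0))];
    try (rewrite rsum_delta by exact Hk; simpl; ring);
    intros l Hl; rewrite (H k l Hk Hl); destruct (Nat.eq_dec k l); simpl; ring.
Qed.

Lemma lambda_min_scalar M C c : (1 <= M)%nat -> is_scalar_mat M C c -> lambda_min M C = c.
Proof.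
  intros HM Hsc. apply Inf_min.
  - exists (fun k => if Nat.eq_dec k 0 then mkC 1 0 else C0). split.
    + exists 0%nat. split; [lia|]. simpl. intros Heq. injection Heq. lra.
    + intros k Hk. apply scalar_matvec; assumption.
  - intros lam [v [[k [Hk Hv]] Hv2]].
    pose proof (Hv2 k Hk) as E. rewrite (scalar_matvec M _ c v Hsc k Hk) in E.
    pose proof (f_equal cre E) as E1. pose proof (f_equal cim E) as E2. simpl in E1, E2.
    destruct (Req_dec lam c) as [->|Hne]; [lra|]. exfalso. apply Hv.
    apply Cext; simpl; apply (Rmult_eq_reg_l (c - lam)); try lra; nra.
Qed.

Lemma epsig_scalar M Cm i g mu : (1 <= M)%nat -> 0 < mu ->
  is_scalar_mat M (Cm i g) (/ mu ^ 2) -> epsig M Cm i g = mu.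
Proof.
  intros HM Hmu Hsc. unfold epsig. rewrite (lambda_min_scalar M _ _ HM Hsc).
  replace (/ mu ^ 2) with ((/ mu) ^ 2) by (field; lra).
  rewrite sqrt_pow2 by (left; apply Rinv_0_lt_compat; exact Hmu).
  field. lra.
Qed.

Lemma in_S_scalar M Cm i g mu e : 0 < mu -> is_scalar_mat M (Cm i g) (/ mu ^ 2) ->
  vn2 M e <= mu ^ 2 -> in_S M Cm i g e.
Proof.
  intros Hmu Hsc He. unfold in_S.
  rewrite (quad_form_eigenvector M _ _ (/ mu ^ 2)) by (apply scalar_matvec; exact Hsc).
  apply Rmult_le_reg_l with (mu ^ 2); [nra|].
  rewrite <- Rmult_assoc, Rinv_r by (apply pow_nonzero; lra). lra.
Qed.

Lemma in_S_zero M Cm i g : in_S M Cm i g zero_vec.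
Proof.
  unfold in_S. rewrite vdot_re.
  rewrite (rsum_ext _ _ (fun _ => 0)), rsum_const by (intros; simpl; ring). lra.
Qed.

Section SINR.
Variables (M G : nat) (hhat : nat -> nat -> cvec) (sigma : nat -> nat -> R).

Definition interference (w : nat -> cvec) (i g : nat) (e : cvec) : R :=
  rsum G (fun l => if Nat.eq_dec l g then 0 else Cnorm2 (vdot M (w l) (vadd (hhat i g) e))).

Lemma SINR_unfold w i g e : SINR M G hhat sigma w i g e =
  Cnorm2 (vdot M (w g) (vadd (hhat i g) e)) / (interference w i g e + sigma i g ^ 2).
Proof. reflexivity. Qed.

Lemma interference_nonneg w i g e : 0 <= interference w i g e.
Proof.
  apply rsum_nonneg. intros k _. destruct (Nat.eq_dec k g); [lra|apply Cnorm2_nonneg].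
Qed.

Lemma SINR_nonneg w i g e : 0 < sigma i g -> 0 <= SINR M G hhat sigma w i g e.
Proof.
  intros Hs. rewrite SINR_unfold. pose proof (interference_nonneg w i g e).
  apply Rmult_le_pos; [apply Cnorm2_nonneg|left; apply Rinv_0_lt_compat; nra].
Qed.

Lemma SINR_le_SNR w i g e : 0 < sigma i g ->
  SINR M G hhat sigma w i g e <= Cnorm2 (vdot M (w g) (vadd (hhat i g) e)) / sigma i g ^ 2.
Proof.
  intros Hs. rewrite SINR_unfold. pose proof (interference_nonneg w i g e).
  apply Rmult_le_compat_l; [apply Cnorm2_nonneg|]. apply Rinv_le_contravar; nra.
Qed.

Lemma SINR_ge_of w i g e t : 0 < sigma i g ->
  t * (interference w i g e + sigma i g ^ 2) <= Cnorm2 (vdot M (w g) (vadd (hhat i g) e)) ->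
  t <= SINR M G hhat sigma w i g e.
Proof.
  intros Hs H. rewrite SINR_unfold. pose proof (interference_nonneg w i g e).
  apply Rmult_le_reg_r with (interference w i g e + sigma i g ^ 2); [nra|].
  unfold Rdiv. rewrite Rmult_assoc, Rinv_l by nra. lra.
Qed.

Variables (N : nat -> nat) (Cm : nat -> nat -> cmat).

Definition robust_SINR (w : nat -> cvec) (i g : nat) : R :=
  Inf (fun s => exists e, in_S M Cm i g e /\ s = SINR M G hhat sigma w i g e).

Lemma robust_SINR_glb w i g : 0 < sigma i g ->
  (forall e, in_S M Cm i g e -> robust_SINR w i g <= SINR M G hhat sigma w i g e) /\
  (forall L, (forall e, in_S M Cm i g e -> L <= SINR M G hhat sigma w i g e) ->
     L <= robust_SINR w i g).
Proof.
  intros Hs. destruct (Inf_glb (fun s => exists e, in_S M Cm i g e /\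
                                   s = SINR M G hhat sigma w i g e) 0) as [H1 H2].
  - exists (SINR M G hhat sigma w i g zero_vec), zero_vec. split; [apply in_S_zero|reflexivity].
  - intros x [e [_ ->]]. apply SINR_nonneg; exact Hs.
  - split.
    + intros e He. apply H1. exists e; split; [exact He|reflexivity].
    + intros L HL. apply H2. intros x [e [He ->]]. apply HL; exact He.
Qed.

Lemma worst_SINR_le w g i : (g < G)%nat -> (i < N g)%nat ->
  worst_SINR M G N hhat sigma Cm w <= robust_SINR w i g.
Proof.
  intros Hg Hi. eapply Rle_trans; [apply (fmin_le _ _ g Hg)|].
  exact (fmin_le (N g) (fun i => robust_SINR w i g) i Hi).
Qed.

Lemma worst_SINR_ge w c : (1 <= G)%nat -> (forall g, (g < G)%nat -> (1 <= N g)%nat) ->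
  (forall g i, (g < G)%nat -> (i < N g)%nat -> c <= robust_SINR w i g) ->
  c <= worst_SINR M G N hhat sigma Cm w.
Proof.
  intros HG HN H. apply fmin_ge; [exact HG|].
  intros g Hg. apply fmin_ge; [apply HN; exact Hg|]. intros i Hi. apply H; assumption.
Qed.
End SINR.

Definition zero_beam : nat -> cvec := fun _ => zero_vec.

Lemma in_W_zero M G pc gamma : 0 < gamma -> in_W M G pc gamma zero_beam.
Proof.
  intros Hg. destruct pc; simpl.
  - rewrite (rsum_ext _ _ (fun _ => 0)), rsum_const; [lra|].
    intros; unfold zero_beam; rewrite vnorm_zero; ring.
  - intros m _. rewrite (rsum_ext _ _ (fun _ => 0)), rsum_const; [lra|].
    intros; unfold zero_beam, zero_vec, Cnorm2; simpl; ring.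
Qed.

Lemma in_W_norm_bound M G pc gamma w g : 0 < gamma -> (g < G)%nat ->
  in_W M G pc gamma w -> vn2 M (w g) <= (1 + INR M) * gamma.
Proof.
  intros Hgam Hg HW. pose proof (pos_INR M). destruct pc; unfold in_W in HW.
  - rewrite <- vnorm_sq.
    assert (vnorm M (w g) ^ 2 <= rsum G (fun g => vnorm M (w g) ^ 2))
      by (apply (rsum_term G (fun g => vnorm M (w g) ^ 2)); [intros; apply pow2_ge_0|exact Hg]).
    nra.
  - assert (vn2 M (w g) <= rsum M (fun _ => gamma)).
    { apply rsum_le. intros m Hm. eapply Rle_trans; [|apply (HW m Hm)].
      apply (rsum_term G (fun g => Cnorm2 (w g m))); [intros; apply Cnorm2_nonneg|exact Hg]. }
    rewrite rsum_const in H0. nra.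
Qed.

Lemma app_feasible_zero M G N hhat sigma Cm : app_feasible M G N hhat sigma Cm zero_beam 0.
Proof.
  intros g i _ _. unfold zeta, zero_beam. rewrite vnorm_zero, sqrt_0.
  pose proof (Cabs_nonneg (vdot M zero_vec (hhat i g))). lra.
Qed.

Lemma zeta_single_group M hhat sigma Cm w t i : zeta M 1 hhat sigma Cm w t i 0 =
  epsig M Cm i 0 * vnorm M (w 0%nat) + sqrt t * sqrt (sigma i 0%nat ^ 2).
Proof.
  unfold zeta. simpl rsum. destruct (Nat.eq_dec 0 0); [|congruence].
  rewrite !Rplus_0_l. reflexivity.
Qed.

Lemma SINR_single_group M hhat sigma w i e : SINR M 1 hhat sigma w i 0 e =
  Cnorm2 (vdot M (w 0%nat) (vadd (hhat i 0%nat) e)) / sigma i 0%nat ^ 2.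
Proof.
  rewrite SINR_unfold. unfold interference. simpl rsum.
  destruct (Nat.eq_dec 0 0); [|congruence]. f_equal. ring.
Qed.

Section Theorem4.
Variables (M G : nat) (N : nat -> nat) (hhat : nat -> nat -> cvec) (sigma : nat -> nat -> R)
  (Cm : nat -> nat -> cmat).
Hypothesis HM : (1 <= M)%nat.
Hypothesis HG : (1 <= G)%nat.
Hypothesis HN : forall g, (g < G)%nat -> (1 <= N g)%nat.
Hypothesis Hsigma : forall g i, (g < G)%nat -> (i < N g)%nat -> 0 < sigma i g.
Hypothesis HC : forall g i, (g < G)%nat -> (i < N g)%nat -> HermitianPD M (Cm i g).

Theorem robust_feasibility t w : 0 <= t -> app_feasible M G N hhat sigma Cm w t ->
  forall g i e, (g < G)%nat -> (i < N g)%nat -> in_S M Cm i g e ->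
    SINR M G hhat sigma w i g e >= t.
Proof.
  intros Ht Hf g i e Hg Hi HS.
  pose proof (error_norm_bound M Cm i g e HM (HC g i Hg Hi) HS) as He.
  set (ep := epsig M Cm i g) in *. set (h := hhat i g).
  set (Dp := rsum G (fun l => if Nat.eq_dec l g then 0 else
                 (Cabs (vdot M (w l) h) + ep * vnorm M (w l)) ^ 2) + sigma i g ^ 2).
  assert (HD : interference M G hhat w i g e + sigma i g ^ 2 <= Dp).
  { apply Rplus_le_compat_r, rsum_le. intros l _. destruct (Nat.eq_dec l g); [lra|].
    rewrite <- Cabs_sq. apply pow_incr. split; [apply Cabs_nonneg|].
    apply (perturbed_amplitude M (w l) h e ep He). }
  assert (Hamp : sqrt t * sqrt Dp <= Cabs (vdot M (w g) (vadd h e))).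
  { pose proof (Hf g i Hg Hi) as Hz. unfold zeta in Hz. fold ep h Dp in Hz.
    pose proof (perturbed_amplitude M (w g) h e ep He). lra. }
  assert (HDp : 0 <= Dp) by (pose proof (interference_nonneg M G hhat w i g e); nra).
  apply Rle_ge, SINR_ge_of; [exact (Hsigma g i Hg Hi)|]. rewrite <- Cabs_sq.
  apply Rle_trans with (t * Dp); [apply Rmult_le_compat_l; assumption|].
  replace (t * Dp) with ((sqrt t * sqrt Dp) ^ 2) by (rewrite Rpow_mult_distr, !pow2_sqrt; lra).
  apply pow_incr. split; [apply Rmult_le_pos; apply sqrt_pos|exact Hamp].
Qed.

Variables (pc : PowerConstraint) (gamma : R).
Hypothesis Hgamma : 0 < gamma.

(* On W_gamma the SINR is bounded, which makes both values finite. *)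
Lemma SINR_bounded_on_W : exists B, forall w, in_W M G pc gamma w ->
  SINR M G hhat sigma w 0 0 zero_vec <= B.
Proof.
  assert (H0 : (0 < G)%nat) by lia. pose proof (HN 0%nat H0) as HN0.
  pose proof (Hsigma 0%nat 0%nat H0 ltac:(lia)) as Hs.
  exists (vn2 M (vadd (hhat 0%nat 0%nat) zero_vec) * ((1 + INR M) * gamma) / sigma 0%nat 0%nat ^ 2).
  intros w Hw. eapply Rle_trans; [apply SINR_le_SNR; exact Hs|].
  apply Rmult_le_compat_r; [left; apply Rinv_0_lt_compat; nra|].
  eapply Rle_trans; [apply cauchy_schwarz|]. rewrite Rmult_comm.
  apply Rmult_le_compat_l; [apply vn2_nonneg|]. apply (in_W_norm_bound M G pc); assumption.
Qed.

Lemma V_App_lub : is_lub (fun t => 0 <= t /\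
    exists w, in_W M G pc gamma w /\ app_feasible M G N hhat sigma Cm w t)
  (V_App M G N hhat sigma Cm pc gamma).
Proof.
  destruct SINR_bounded_on_W as [B HB]. apply Sup_lub.
  - exists 0. split; [lra|]. exists zero_beam.
    split; [apply in_W_zero; exact Hgamma|apply app_feasible_zero].
  - exists B. intros t [Ht [w [Hw Hf]]].
    pose proof (robust_feasibility t w Ht Hf 0 0 zero_vec ltac:(lia)
                  ltac:(pose proof (HN 0%nat ltac:(lia)); lia) (in_S_zero _ _ _ _)).
    pose proof (HB w Hw). lra.
Qed.

Lemma V_MMF_lub : is_lub (fun r => exists w, in_W M G pc gamma w /\
    r = worst_SINR M G N hhat sigma Cm w) (V_MMF M G N hhat sigma Cm pc gamma).
Proof.
  destruct SINR_bounded_on_W as [B HB]. apply Sup_lub.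
  - eexists. exists zero_beam. split; [apply in_W_zero; exact Hgamma|reflexivity].
  - exists B. intros r [w [Hw ->]].
    assert (H0 : (0 < G)%nat) by lia. assert (H00 : (0 < N 0%nat)%nat) by (pose proof (HN 0%nat H0); lia).
    eapply Rle_trans; [apply (worst_SINR_le M G hhat sigma N Cm w 0 0 H0 H00)|].
    eapply Rle_trans; [apply (proj1 (robust_SINR_glb M G hhat sigma Cm w 0 0 (Hsigma 0 0 H0 H00))), in_S_zero|].
    apply HB; exact Hw.
Qed.

Theorem V_App_le_V_MMF : V_App M G N hhat sigma Cm pc gamma <= V_MMF M G N hhat sigma Cm pc gamma.
Proof.
  apply (proj2 V_App_lub). intros t [Ht [w [Hw Hf]]].
  apply Rle_trans with (worst_SINR M G N hhat sigma Cm w).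
  - apply worst_SINR_ge; [exact HG|exact HN|]. intros g i Hg Hi.
    apply (proj2 (robust_SINR_glb M G hhat sigma Cm w i g (Hsigma g i Hg Hi))).
    intros e He. apply Rge_le, (robust_feasibility t w Ht Hf g i e Hg Hi He).
  - apply (proj1 V_MMF_lub). exists w. split; [exact Hw|reflexivity].
Qed.

Lemma robust_SINR_single_group w i mu : G = 1%nat -> 0 < mu -> (i < N 0)%nat ->
  is_scalar_mat M (Cm i 0%nat) (/ mu ^ 2) ->
  robust_SINR M 1 hhat sigma Cm w i 0 * sigma i 0%nat ^ 2 <=
  Rmax 0 (Cabs (vdot M (w 0%nat) (hhat i 0%nat)) - mu * vnorm M (w 0%nat)) ^ 2.
Proof.
  intros HG1 Hmu Hi Hsc. subst G. pose proof (Hsigma 0 i ltac:(lia) Hi) as Hs.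
  destruct (worst_perturbation M (w 0%nat) (hhat i 0%nat) mu Hmu) as [e [He Ee]].
  pose proof (proj1 (robust_SINR_glb M 1 hhat sigma Cm w i 0 Hs) e
                (in_S_scalar M Cm i 0 mu e Hmu Hsc He)) as Hle.
  rewrite SINR_single_group, Ee in Hle.
  apply Rmult_le_reg_r with (/ sigma i 0%nat ^ 2); [apply Rinv_0_lt_compat; nra|].
  rewrite Rmult_assoc, Rinv_r by (apply pow_nonzero; lra). lra.
Qed.

(* Part (c): with one group and spherical uncertainty, any w is feasible for
   the approximation at its worst-case SINR, so the two values coincide. *)
Theorem V_App_eq_V_MMF_single_group mu : 0 < mu -> G = 1%nat ->
  (forall i, (i < N 0)%nat -> is_scalar_mat M (Cm i 0%nat) (/ mu ^ 2)) ->
  V_App M G N hhat sigma Cm pc gamma = V_MMF M G N hhat sigma Cm pc gamma.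
Proof.
  intros Hmu HG1 Hsc. apply Rle_antisym; [exact V_App_le_V_MMF|].
  apply (proj2 V_MMF_lub). intros r [w [Hw ->]].
  set (t := worst_SINR M G N hhat sigma Cm w).
  destruct (Rle_lt_dec t 0) as [Ht0|Htpos].
  - apply Rle_trans with 0; [exact Ht0|]. apply (proj1 V_App_lub). split; [lra|].
    exists zero_beam. split; [apply in_W_zero; exact Hgamma|apply app_feasible_zero].
  - apply (proj1 V_App_lub). split; [lra|]. exists w. split; [exact Hw|].
    intros g i Hg Hi. assert (g = 0%nat) by lia. subst g.
    pose proof (Hsigma 0 i Hg Hi) as Hs.
    pose proof (robust_SINR_single_group w i mu HG1 Hmu Hi (Hsc i Hi)) as Hrob.
    pose proof (worst_SINR_le M G hhat sigma N Cm w 0 i Hg Hi) as Hworst. fold t in Hworst.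
    subst G. rewrite zeta_single_group, (epsig_scalar M Cm i 0 mu HM Hmu (Hsc i Hi)).
    rewrite sqrt_pow2 by lra.
    set (a := Cabs (vdot M (w 0%nat) (hhat i 0%nat)) - mu * vnorm M (w 0%nat)) in *.
    assert (Hta : t * sigma i 0%nat ^ 2 <= Rmax 0 a ^ 2).
    { apply Rle_trans with (robust_SINR M 1 hhat sigma Cm w i 0 * sigma i 0%nat ^ 2);
        [apply Rmult_le_compat_r; [apply pow2_ge_0|exact Hworst]|exact Hrob]. }
    assert (Hpos : 0 < t * sigma i 0%nat ^ 2) by (apply Rmult_lt_0_compat; nra).
    unfold Rmax in Hta. destruct (Rle_dec 0 a) as [Ha|Ha]; [|nra].
    assert (sqrt t * sigma i 0%nat <= a).
    { apply le_of_sq_le; [exact Ha|]. rewrite Rpow_mult_distr, pow2_sqrt; lra. }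
    unfold a in *. lra.
Qed.
End Theorem4.

Theorem mainTheorem4
  (M G : nat) (N : nat -> nat) (hhat : nat -> nat -> cvec) (sigma : nat -> nat -> R)
  (Cm : nat -> nat -> cmat) (pc : PowerConstraint) (gamma : R)
  (HM : (1 <= M)%nat) (HG : (1 <= G)%nat)
  (HN : forall g, (g < G)%nat -> (1 <= N g)%nat)
  (Hsigma : forall g i, (g < G)%nat -> (i < N g)%nat -> 0 < sigma i g)
  (HC : forall g i, (g < G)%nat -> (i < N g)%nat -> HermitianPD M (Cm i g))
  (Hgamma : 0 < gamma) :
  (* (a) *)
  (forall (t : R) (w : nat -> cvec), 0 <= t -> in_W M G pc gamma w ->
     app_feasible M G N hhat sigma Cm w t ->
     forall g i e, (g < G)%nat -> (i < N g)%nat -> in_S M Cm i g e ->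
       SINR M G hhat sigma w i g e >= t)
  /\
  (* (b) *)
  V_App M G N hhat sigma Cm pc gamma <= V_MMF M G N hhat sigma Cm pc gamma
  /\
  (* (c) *)
  (forall mu : R, 0 < mu -> G = 1%nat ->
     (forall i k l, (i < N 0)%nat -> (k < M)%nat -> (l < M)%nat ->
        Cm i 0%nat k l = (if Nat.eq_dec k l then RtoC (/ mu ^ 2) else C0)) ->
     V_App M G N hhat sigma Cm pc gamma = V_MMF M G N hhat sigma Cm pc gamma).
Proof.
  split; [|split].
  - intros t w Ht _ Hf. exact (robust_feasibility M G N hhat sigma Cm HM Hsigma HC t w Ht Hf).
  - exact (V_App_le_V_MMF M G N hhat sigma Cm HM HG HN Hsigma HC pc gamma Hgamma).
  - intros mu Hmu HG1 Hsc.
    exact (V_App_eq_V_MMF_single_group M G N hhat sigma Cm HM HG HN Hsigma HC pc gamma Hgamma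
             mu Hmu HG1 (fun i Hi k l Hk Hl => Hsc i k l Hi Hk Hl)).
Qed.
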